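(* Let $H$ be the graph consisting of three vertex-disjoint copies of $K_{4,4}$. Then the complement $\overline{H}$ is not a $2$-AND-PCG.
   Context: All trees are unrooted with edges weighted by nonnegative reals; $d_T(u,v)$ is the weight of the path between leaves $u,v$ of $T$. A graph $G$ is a PCG if there exist a tree $T$ with leaf set $V(G)$ and an interval $I$ of nonnegative reals such that $\{u,v\}\in E(G)$ iff $d_T(u,v)\in I$. A graph $G=(V,E)$ is a $k$-AND-PCG if there exist $k$ PCGs $G_1,\ldots,G_k$ on vertex set $V$ with $E=\bigcap_i E(G_i)$. *)

From HB Require Import structures.
From mathcomp Require Import all_boot all_order all_algebra.
From mathcomp Require Import reals.
Set Implicit Arguments. Unset Strict Implicit. Unset Printing Implicit Defensive.
Import Order.TTheory GRing.Theory Num.Theory.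
Local Open Scope ring_scope.

Definition is_tree (N : finType) (e : rel N) : Prop :=
  symmetric e /\ irreflexive e /\
  (forall x y : N, connect e x y) /\
  (forall (x : N) (p : seq N),
      path e x p -> uniq (x :: p) -> (2 <= size p)%N -> ~~ e (last x p) x).

Definition is_leaf (N : finType) (e : rel N) (x : N) : bool :=
  #|[set y | e x y]| == 1%N.

Definition walk_weight (R : realType) (N : finType) (w : N -> N -> R)
  (x : N) (p : seq N) : R := \sum_(c <- pairmap w x p) c.

Definition nonneg_interval (R : realType) (I : R -> Prop) : Prop :=
  (forall x, I x -> 0 <= x) /\
  (forall a b x, I a -> I b -> a <= x -> x <= b -> I x).

(* G = (V, E) is a pairwise compatibility graph: there is an edge-weighted
   tree (N, e, w) whose leaf set is (identified via the bijection [f] with) V,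
   and an interval I with {u,v} in E iff d_T(f u, f v) in I.  d_T(a,b) is the
   weight of the (unique) simple path from a to b in the tree. *)
Definition is_PCG (R : realType) (V : finType) (E : rel V) : Prop :=
  exists (N : finType) (e : rel N) (w : N -> N -> R) (f : V -> N) (I : R -> Prop),
    is_tree e /\
    (forall x y, e x y -> 0 <= w x y /\ w x y = w y x) /\
    injective f /\
    (forall x, is_leaf e x <-> exists v, f v = x) /\
    nonneg_interval I /\
    (forall u v : V,
            E u v <->
            (u != v /\
             exists p : seq N,
               [/\ path e (f u) p, uniq (f u :: p), last (f u) p = f v &
                   I (walk_weight w (f u) p)])).

Definition is_k_AND_PCG (R : realType) (k : nat) (V : finType) (E : rel V) : Prop :=
  exists Es : 'I_k -> rel V,
    (forall i, is_PCG R (Es i)) /\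
    (forall u v, E u v <-> (forall i, Es i u v)).

Definition compl_graph (V : finType) (E : rel V) : rel V :=
  fun u v => (u != v) && ~~ E u v.

(* H = three vertex-disjoint copies of K_{4,4}.  A vertex is
   (copy, (side, index)) with copy : 'I_3, side : 'I_2, index : 'I_4. *)
Definition HV : finType := ('I_3 * ('I_2 * 'I_4))%type.
Definition H_edge : rel HV :=
  fun x y => (x.1 == y.1) && (x.2.1 != y.2.1).

(* A PCG is realised by a tree metric d, which satisfies the four-point condition, and an
   interval I: two distinct vertices are adjacent iff their distance lies in I.  Suppose the
   complement of H is the intersection of two PCGs.  In each of them every pair of vertices
   from different copies of K_{4,4}, and every pair on the same side of a copy, is an edge.
   By the four-point condition, two copies cannot both contain a pair at distance above I,
   so some copy q has no such pair in either model, and there every non-edge between the two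
   sides of q lies below I.  Fixing a root and a vertex of q at minimal distance from it, the
   four-point condition lets each such non-edge be charged injectively to its farther
   endpoint other than that vertex, so each PCG misses at most 7 of the 16 pairs between the
   sides of q.  Yet each of these 16 pairs must be missing from one of the two PCGs. *)

From HB Require Import structures.
From mathcomp Require Import all_boot all_order all_algebra.
From mathcomp Require Import reals.
From mathcomp Require Import lra zify.
From Stdlib Require Import Classical.
Set Implicit Arguments. Unset Strict Implicit. Unset Printing Implicit Defensive.
Import Order.TTheory GRing.Theory Num.Theory.
Local Open Scope ring_scope.

Definition four_point (T : Type) (R : numDomainType) (d : T -> T -> R) : Prop :=
  forall x y z t, d x y + d z t <= d x z + d y t \/ d x y + d z t <= d x t + d y z.

Definition convex_pred (R : numDomainType) (I : R -> Prop) : Prop :=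
  forall a b x, I a -> I b -> a <= x -> x <= b -> I x.

Definition above (R : numDomainType) (I : R -> Prop) (x : R) : Prop := forall z, I z -> z < x.
Definition below (R : numDomainType) (I : R -> Prop) (x : R) : Prop := forall z, I z -> x < z.

Lemma convex_pred_notin (R : realDomainType) (I : R -> Prop) x :
  convex_pred I -> ~ I x -> above I x \/ below I x.
Proof.
move=> I_convex xNI; have [x_above|x_not_above] := classic (above I x); [by left | right].
move=> z Iz; rewrite ltNge; apply/negP => zx; apply: x_not_above => z' Iz'.
by rewrite ltNge; apply/negP => xz'; apply/xNI/(I_convex _ _ _ Iz Iz').
Qed.

Lemma walk_weight_rcons (R : realType) (N : finType) (w : N -> N -> R) x p z :
  walk_weight w x (rcons p z) = walk_weight w x p + w (last x p) z.
Proof. by rewrite /walk_weight -cats1 pairmap_cat big_cat big_seq1. Qed.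

Section TreeMetric.
Variables (R : realType) (N : finType) (e : rel N) (w : N -> N -> R).
Hypotheses (e_sym : symmetric e) (e_irr : irreflexive e).
Hypothesis e_conn : forall x y, connect e x y.
Hypothesis e_acyclic : forall (x : N) (p : seq N),
  path e x p -> uniq (x :: p) -> (2 <= size p)%N -> ~~ e (last x p) x.
Hypothesis w_ge0 : forall x y, e x y -> 0 <= w x y.
Hypothesis w_sym : forall x y, e x y -> w x y = w y x.

Definition del_edge (s t : N) : rel N :=
  fun x y => e x y && ~~ ((x == s) && (y == t) || (x == t) && (y == s)).

Lemma del_edge_sym s t : symmetric (del_edge s t).
Proof.
move=> x y; rewrite /del_edge e_sym; congr (_ && ~~ _).
by case: (x == s); case: (y == t); case: (x == t); case: (y == s).
Qed.

Lemma del_edgeC s t : del_edge s t =2 del_edge t s.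
Proof.
move=> x y; rewrite /del_edge; congr (_ && ~~ _).
by case: (x == s); case: (y == t); case: (x == t); case: (y == s).
Qed.

Lemma del_edge_other s t x y : e x y -> (s, t) != (x, y) -> (s, t) != (y, x) ->
  del_edge s t x y.
Proof.
move=> exy nxy nyx; rewrite /del_edge exy /=.
by apply/negP => /orP [] /andP [/eqP xs /eqP yt]; [move: nxy | move: nyx];
  rewrite xs yt eqxx.
Qed.

Lemma connect_del_edge_sym s t : connect_sym (del_edge s t).
Proof. exact/sym_connect_sym/del_edge_sym. Qed.

Lemma path_del_edge x p s t : path e x p -> t \notin x :: p -> path (del_edge s t) x p.
Proof.
move=> xp tNp; apply: (@sub_in_path _ (predC1 t) e) xp; last first.
  by apply/allP => y yp /=; apply: contraNneq tNp => <-.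
move=> a b /= at_ bt eab; rewrite /del_edge eab /=.
by rewrite (negbTE at_) (negbTE bt) !andbF.
Qed.

(* A simple path from [s] to [t] avoiding the edge [st] would close a cycle with it. *)
Lemma del_edge_disconnects s t : e s t -> ~~ connect (del_edge s t) s t.
Proof.
move=> est; apply/negP => /connectP [p sp tp].
case: (shortenP sp) tp => q sq uq _ tq.
have eq_path : path e s q by apply: sub_path sq => a b /andP [].
case: q sq uq eq_path tq => [|y [|z q]].
- by move=> _ _ _ /= st; move: est; rewrite -st e_irr.
- by move=> /= /andP [] + _ _ _ yt; rewrite /del_edge yt !eqxx andbF.
move=> _ uq pq tq; have := e_acyclic pq uq.
by rewrite -tq e_sym est => /(_ isT).
Qed.

Lemma connect_del_edge_ends s t x : e s t ->
  connect (del_edge s t) s x || connect (del_edge s t) t x.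
Proof.
move=> est; have /connectP [p sp ->] := e_conn s x.
elim/last_ind: p sp => [|p z IHp] /=; first by rewrite connect0.
rewrite rcons_path last_rcons => /andP [/IHp reach ez].
have [ez'|] := boolP (del_edge s t (last s p) z).
  by case/orP: reach => r; apply/orP; [left|right]; apply: connect_trans r (connect1 ez').
rewrite /del_edge ez negbK => /orP [] /andP [_ /eqP ->].
  by rewrite connect0 orbT.
by rewrite connect0.
Qed.

Lemma del_edge_sides s t x : e s t ->
  connect (del_edge s t) s x = ~~ connect (del_edge s t) t x.
Proof.
move=> est; have [tx|tNx] := boolP (connect (del_edge s t) t x).
  apply/negP => sx; move/negP: (del_edge_disconnects est); apply.
  by apply: connect_trans sx _; rewrite connect_del_edge_sym.
by have := connect_del_edge_ends x est; rewrite (negbTE tNx) orbF => ->.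
Qed.

Lemma connect_del_edge_avoid (r : rel N) s t u x : subrel r e ->
  ~~ connect r u t -> connect r u x -> connect (del_edge s t) u x.
Proof.
move=> sub_r ut /connectP [p up ->].
apply: path_connect (path_del_edge _ (sub_path sub_r up) _) _ (mem_last _ _).
by apply: contra ut => /(path_connect up).
Qed.

Definition beyond (st : N * N) (x : N) : bool := connect (del_edge st.1 st.2) st.2 x.

Definition cut_weight (st : N * N) (x y : N) : R :=
  if beyond st x != beyond st y then w st.1 st.2 else 0.

(* Every edge is counted in both orientations, so this is twice the tree distance. *)
Definition cut_dist (x y : N) : R := \sum_(st | e st.1 st.2) cut_weight st x y.

Definition tree_dist (x y : N) : R := cut_dist x y / 2.

Lemma beyond_del_edge s t x y : del_edge s t x y -> beyond (s, t) x = beyond (s, t) y.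
Proof.
by move=> /connect1 xy; rewrite /beyond (same_connect_r (@connect_del_edge_sym _ _) xy).
Qed.

Lemma cut_dist_step x z z' : e z z' -> connect (del_edge z z') x z ->
  cut_dist x z' = cut_dist x z + 2 * w z z'.
Proof.
move=> ezz' xz; have zz' : z != z' by apply: contraTneq ezz' => ->; rewrite e_irr.
have zx : connect (del_edge z z') z x by rewrite connect_del_edge_sym.
have z'x : connect (del_edge z z') z' x = false by apply/negbTE; rewrite -del_edge_sides.
have zz'F : connect (del_edge z z') z z' = false by apply/negbTE/del_edge_disconnects.
have z'zF : connect (del_edge z z') z' z = false by rewrite connect_del_edge_sym.
have sum1 c : e c.1 c.2 ->
    \sum_(st | e st.1 st.2) (if st == c then w z z' else 0) = w z z'.
  by move=> ec; rewrite (bigD1 c) //= eqxx big1 ?addr0 // => st /andP [_ /negbTE ->].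
have split_sum : cut_dist x z' = cut_dist x z +
    \sum_(st | e st.1 st.2) (if st == (z, z') then w z z' else 0) +
    \sum_(st | e st.1 st.2) (if st == (z', z) then w z z' else 0).
  rewrite /cut_dist -!big_split /=; apply: eq_bigr => [[s t]] /= est.
  rewrite /cut_weight; have [[-> ->]|ne1] := eqVneq (s, t) (z, z').
    rewrite (negbTE (_ : (z, z') != (z', z))); last by apply: contra zz' => /eqP [->].
    by rewrite /beyond /= connect0 z'x z'zF /= addr0 add0r.
  have [[-> ->]|ne2] := eqVneq (s, t) (z', z).
    rewrite /beyond /= -!(eq_connect (del_edgeC z z')) connect0 zx zz'F.
    by rewrite /= !add0r (w_sym ezz').
  by rewrite (beyond_del_edge (del_edge_other ezz' ne1 ne2)) !addr0.
by rewrite split_sum !sum1 // 1?e_sym // -addrA -mulr2n mulr_natl.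
Qed.

Lemma cut_dist_path x p : path e x p -> uniq (x :: p) ->
  cut_dist x (last x p) = 2 * walk_weight w x p.
Proof.
elim/last_ind: p => [|p z' IHp].
  move=> _ _; rewrite /walk_weight big_nil mulr0 /cut_dist big1 // => st _.
  by rewrite /cut_weight eqxx.
rewrite rcons_path -rcons_cons rcons_uniq last_rcons => /andP [xp ez'] /andP [z'Np up].
have xz : connect (del_edge (last x p) z') x (last x p).
  by apply: path_connect (path_del_edge _ xp z'Np) _ (mem_last _ _).
by rewrite (cut_dist_step ez' xz) IHp // walk_weight_rcons mulrDr.
Qed.

Lemma walk_weight_tree_dist x p : path e x p -> uniq (x :: p) ->
  walk_weight w x p = tree_dist x (last x p).
Proof. by move=> xp up; rewrite /tree_dist cut_dist_path //; lra. Qed.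

Lemma beyond_nested s1 t1 s2 t2 : e s1 t1 ->
  exists side, forall x y, beyond (s1, t1) x = side -> beyond (s1, t1) y = side ->
    beyond (s2, t2) x = beyond (s2, t2) y.
Proof.
move=> e1.
have stay u x : connect (del_edge s1 t1) u x -> ~~ connect (del_edge s1 t1) u t2 ->
    beyond (s2, t2) x = beyond (s2, t2) u.
  move=> ux ut2; apply/esym/same_connect_r; first exact: connect_del_edge_sym.
  by apply: connect_del_edge_avoid ut2 ux => a b /andP [].
have [t2_beyond|t2_near] := boolP (beyond (s1, t1) t2).
  exists false => x y xF yF.
  have near z : beyond (s1, t1) z = false -> connect (del_edge s1 t1) s1 z.
    by move=> zF; rewrite del_edge_sides //; apply/negbT: zF.
  have s1t2 : ~~ connect (del_edge s1 t1) s1 t2 by rewrite del_edge_sides // negbK.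
  by rewrite (stay s1 x (near x xF) s1t2) (stay s1 y (near y yF) s1t2).
exists true => x y xT yT.
by rewrite (stay t1 x xT t2_near) (stay t1 y yT t2_near).
Qed.

Definition splits (st : N * N) (a b c d : N) : bool :=
  [&& beyond st a == beyond st b, beyond st c == beyond st d & beyond st a != beyond st c].

Lemma splits_incompatible st1 st2 a b c d : e st1.1 st1.2 ->
  splits st1 a c b d -> splits st2 a d b c -> False.
Proof.
case: st1 st2 => [s1 t1] [s2 t2] e1; have [side nested] := beyond_nested s2 t2 e1.
move=> /and3P [/eqP ac /eqP bd ab] /and3P [/eqP ad /eqP bc].
have [a_side|a_other] := eqVneq (beyond (s1, t1) a) side.
  by rewrite bc (nested a c) -?ac ?eqxx.
have b_side : beyond (s1, t1) b = side.
  by move: ab a_other; clear nested; case: (beyond _ a); case: (beyond _ b); case: side.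
by rewrite ad (nested b d) -?bd ?eqxx.
Qed.

Lemma cut_weightC st x y : cut_weight st x y = cut_weight st y x.
Proof. by rewrite /cut_weight eq_sym. Qed.

Lemma cut_weight_four_point st a b c d : e st.1 st.2 -> ~~ splits st a c b d ->
  cut_weight st a b + cut_weight st c d <= cut_weight st a c + cut_weight st b d.
Proof.
move=> est; have := w_ge0 est; rewrite /splits /cut_weight.
by case: (beyond st a); case: (beyond st b); case: (beyond st c); case: (beyond st d) => /=;
  lra.
Qed.

Lemma cut_dist_four_point : four_point cut_dist.
Proof.
move=> a b c d; rewrite /cut_dist -!big_split /=.
have [/existsP [st1 /andP [e1 split1]]|no_split] :=
  boolP [exists st : N * N, e st.1 st.2 && splits st a c b d].
- right; apply: ler_sum => st est; rewrite (cut_weightC _ c d).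
  apply: (cut_weight_four_point est); apply/negP => split2.
  exact: (splits_incompatible e1 split1 split2).
- left; apply: ler_sum => st est; apply: (cut_weight_four_point est).
  by apply: contra no_split => split1; apply/existsP; exists st; rewrite est.
Qed.

Lemma tree_dist_four_point : four_point tree_dist.
Proof. by move=> a b c d; rewrite /tree_dist; case: (cut_dist_four_point a b c d); lra. Qed.

Lemma tree_distC x y : tree_dist x y = tree_dist y x.
Proof.
by rewrite /tree_dist /cut_dist; congr (_ / 2); apply: eq_bigr => st _; apply: cut_weightC.
Qed.

Lemma exists_simple_path x y : exists p, [/\ path e x p, uniq (x :: p) & last x p = y].
Proof.
have /connectP [p xp ->] := e_conn x y.
by case: (shortenP xp) => q xq uq _; exists q.
Qed.

End TreeMetric.

Lemma PCG_four_point_model (R : realType) (V : finType) (E : rel V) : is_PCG R E ->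
  exists (d : V -> V -> R) (I : R -> Prop), [/\ convex_pred I,
    forall u v, u != v -> E u v <-> I (d u v),
    forall u v, d u v = d v u & four_point d].
Proof.
case=> N [e [w [f [I
  [[e_sym [e_irr [e_conn e_acyclic]]] [w_ok [_ [_ [[_ I_convex] E_I]]]]]]]]].
have w_ge0 x y (exy : e x y) := (w_ok x y exy).1.
have w_sym x y (exy : e x y) := (w_ok x y exy).2.
exists (fun u v => tree_dist e w (f u) (f v)), I; split => //.
- move=> u v uv; rewrite E_I; split.
    case=> _ [p [up uniq_p <- pI]].
    by rewrite -(walk_weight_tree_dist e_sym e_irr e_conn e_acyclic w_sym up uniq_p).
  move=> uvI; split => //.
  have [p [up uniq_p pv]] := exists_simple_path e_conn (f u) (f v).
  exists p; split => //.
  by rewrite (walk_weight_tree_dist e_sym e_irr e_conn e_acyclic w_sym up uniq_p) pv.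
- by move=> u v; apply: tree_distC.
- move=> a b c d.
  exact: (tree_dist_four_point e_sym e_irr e_conn e_acyclic w_ge0 (f a) (f b) (f c) (f d)).
Qed.

Section FourPointInterval.
Variables (R : realFieldType) (T : Type) (d : T -> T -> R) (I : R -> Prop).
Hypotheses (d_sym : forall x y, d x y = d y x) (d_four : four_point d).

Lemma four_point_two_above u1 v1 u2 v2 : above I (d u1 v1) -> above I (d u2 v2) ->
  I (d u1 u2) -> I (d u1 v2) -> I (d v1 u2) -> I (d v1 v2) -> False.
Proof.
move=> above1 above2 I11 I12 I21 I22.
move: (above1 _ I11) (above1 _ I12) (above2 _ I21) (above2 _ I22).
by case: (d_four u1 v1 u2 v2); lra.
Qed.

Lemma four_point_below_star r x y z : below I (d x y) -> below I (d x z) ->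
  I (d y z) -> d r y <= d r x -> d r z <= d r x -> False.
Proof.
move=> below_y below_z Iyz; move: (below_y _ Iyz) (below_z _ Iyz).
case: (d_four y z x r); rewrite !(d_sym _ r) ?(d_sym y x) ?(d_sym z x); lra.
Qed.

Section BelowPairs.
Variables (A B : finType) (a0 : A) (x : A -> T) (y : B -> T).
Hypothesis xI : forall k k', k != k' -> I (d (x k) (x k')).
Hypothesis yI : forall l l', l != l' -> I (d (y l) (y l')).

Let vertex (s : A + B) : T := match s with inl k => x k | inr l => y l end.

Let h s := d (x a0) (vertex s).
Let s0 := [arg min_(s < inl a0) h s]%O.

(* Charging a below-pair to its higher endpoint is injective by [four_point_below_star];
   the tie-break keeps the global minimum [s0] out of the image. *)
Let top u v := if u == s0 then v else if v == s0 then u else if h v <= h u then u else v.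

Lemma top_spec u v : u != v -> top u v != s0 /\
  (top u v = u /\ h v <= h u \/ top u v = v /\ h u <= h v).
Proof.
have s0_min s : h s0 <= h s by rewrite /s0; case: arg_minP => // i _; apply.
move=> uv; rewrite /top.
have [us0|u_s0] := eqVneq u s0.
  by split; [rewrite -us0 eq_sym | right; rewrite us0].
have [vs0|v_s0] := eqVneq v s0; first by split => //; left; rewrite vs0.
by case: leP => hvu; split => //; [left | right; split => //; apply: ltW].
Qed.

Lemma card_below_pairs (S : {set A * B}) :
  {in S, forall kl, below I (d (x kl.1) (y kl.2))} -> (#|S| < #|A| + #|B|)%N.
Proof.
move=> S_below.
pose c (kl : A * B) := top (inl kl.1) (inr kl.2).
have c_inj : {in S &, injective c}.
  move=> [k l] [k' l'] /S_below /= below_kl /S_below /= below_kl'.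
  have [_ spec] := top_spec (isT : inl k != inr l).
  have [_ spec'] := top_spec (isT : inl k' != inr l').
  rewrite /c /=; case: spec => -[-> h1]; case: spec' => -[-> h2] // -[eq_c]; subst.
  - have [-> //|ll'] := eqVneq l l'.
    by case: (four_point_below_star below_kl below_kl' (yI ll') h1 h2).
  - have [-> //|kk'] := eqVneq k k'.
    rewrite d_sym in below_kl; rewrite d_sym in below_kl'.
    by case: (four_point_below_star below_kl below_kl' (xI kk') h1 h2).
rewrite -(card_in_imset c_inj) -card_sum.
apply: (@leq_ltn_trans #|[set~ s0]|); last first.
  by rewrite cardsC1 prednK //; apply/card_gt0P; exists (inl a0).
apply/subset_leq_card/subsetP => _ /imsetP [[k l] _ ->]; rewrite !inE.
by have [] := top_spec (isT : inl k != inr l).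
Qed.

End BelowPairs.
End FourPointInterval.

Lemma exists_neq2 (T : finType) (a b : T) : (2 < #|T|)%N -> exists c, (c != a) && (c != b).
Proof.
move=> T_gt2; have : (0 < #|[set~ a] :\ b|)%N.
  have := cardsD1 b [set~ a]; have := leq_b1 (b \in [set~ a]); rewrite cardsC1; lia.
by case/card_gt0P => c; rewrite !inE => /andP [cb ca]; exists c; rewrite ca cb.
Qed.

Definition cross_nonedges (E : rel HV) (q : 'I_3) : {set 'I_4 * 'I_4} :=
  [set kl | ~~ E (q, (ord0, kl.1)) (q, (ord_max, kl.2))].

Lemma compl_H_edge_copies (u v : HV) : u.1 != v.1 -> compl_graph H_edge u v.
Proof.
move=> uv; rewrite /compl_graph /H_edge (negbTE uv) /= andbT.
by apply: contra uv => /eqP ->.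
Qed.

Lemma compl_H_edge_side (u v : HV) : u.1 = v.1 -> u.2.1 = v.2.1 -> u != v ->
  compl_graph H_edge u v.
Proof. by move=> uv1 uv2 uv; rewrite /compl_graph /H_edge uv uv1 uv2 !eqxx. Qed.

Lemma compl_H_edge_opposite q k l : ~~ compl_graph H_edge (q, (ord0, k)) (q, (ord_max, l)).
Proof. by rewrite /compl_graph /H_edge /= eqxx andbF. Qed.

Section ComplementSupergraph.
Variables (R : realFieldType) (E : rel HV) (d : HV -> HV -> R) (I : R -> Prop).
Hypotheses (I_convex : convex_pred I) (E_I : forall u v, u != v -> E u v <-> I (d u v)).
Hypotheses (d_sym : forall u v, d u v = d v u) (d_four : four_point d).
Hypothesis E_super : forall u v, compl_graph H_edge u v -> E u v.

Lemma interval_compl_H_edge u v : compl_graph H_edge u v -> I (d u v).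
Proof. by move=> uv; apply/E_I; [case/andP: uv | apply: E_super]. Qed.

Lemma above_pairs_same_copy u1 v1 u2 v2 : u1.1 = v1.1 -> u2.1 = v2.1 ->
  above I (d u1 v1) -> above I (d u2 v2) -> u1.1 = u2.1.
Proof.
move=> uv1 uv2 above1 above2; apply/eqP/negP => /negP u12.
apply: (four_point_two_above d_four above1 above2);
  by apply/interval_compl_H_edge/compl_H_edge_copies; rewrite -?uv1 -?uv2.
Qed.

Lemma exists_copy_without_above : exists p : 'I_3, forall q, q != p ->
  forall u v, u.1 = q -> v.1 = q -> ~ above I (d u v).
Proof.
have [[u [v [uv u_above]]]|no_above] := classic (exists u v, u.1 = v.1 /\ above I (d u v)).
  exists u.1 => q qu u' v' u'q v'q u'_above; move: qu; rewrite -u'q.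
  by rewrite (above_pairs_same_copy uv (etrans u'q (esym v'q)) u_above u'_above) eqxx.
by exists ord0 => q _ u v uq vq u_above; apply: no_above; exists u, v; rewrite uq vq.
Qed.

Lemma card_cross_nonedges q : (forall u v, u.1 = q -> v.1 = q -> ~ above I (d u v)) ->
  (#|cross_nonedges E q| < 8)%N.
Proof.
move=> no_above; have <- : (#|'I_4| + #|'I_4| = 8)%N by rewrite card_ord.
apply: (card_below_pairs (I := I) d_sym d_four ord0 (x := fun k => (q, (ord0, k)))
  (y := fun l => (q, (ord_max, l)))) => [k k' kk'|l l' ll'|[k l]].
- by apply/interval_compl_H_edge/compl_H_edge_side => //; apply: contra kk' => /eqP [->].
- by apply/interval_compl_H_edge/compl_H_edge_side => //; apply: contra ll' => /eqP [->].
rewrite inE /= => nonedge.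
have uv : (q, (ord0, k)) != (q, (ord_max, l)) :> HV by rewrite !xpair_eqE eqxx.
have uvNI : ~ I (d (q, (ord0, k)) (q, (ord_max, l))) by move/(E_I uv); apply/negP.
have [abv|//] := convex_pred_notin I_convex uvNI.
by case: (no_above (q, (ord0, k)) (q, (ord_max, l)) erefl erefl abv).
Qed.

End ComplementSupergraph.

Lemma PCG_supergraph_cross_nonedges (R : realType) (E : rel HV) : is_PCG R E ->
  (forall u v, compl_graph H_edge u v -> E u v) ->
  exists p : 'I_3, forall q, q != p -> (#|cross_nonedges E q| < 8)%N.
Proof.
move=> /PCG_four_point_model [d [I [I_convex E_I d_sym d_four]]] E_super.
have [p no_above] := exists_copy_without_above E_I d_four E_super.
exists p => q qp.
exact: (card_cross_nonedges I_convex E_I d_sym d_four E_super (no_above q qp)).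
Qed.

Theorem theorem12 (R : realType) : ~ is_k_AND_PCG R 2 (compl_graph H_edge).
Proof.
case=> Es [Es_PCG Es_and].
have Es_super i u v : compl_graph H_edge u v -> Es i u v by move/Es_and.
have [p0 small0] := PCG_supergraph_cross_nonedges (Es_PCG ord0) (Es_super ord0).
have [p1 small1] := PCG_supergraph_cross_nonedges (Es_PCG ord_max) (Es_super ord_max).
have [q /andP [qp0 qp1]] : exists q : 'I_3, (q != p0) && (q != p1).
  by apply: exists_neq2; rewrite card_ord.
have cover : [set: 'I_4 * 'I_4] \subset
    cross_nonedges (Es ord0) q :|: cross_nonedges (Es ord_max) q.
  apply/subsetP => [[k l]] _; rewrite !inE -negb_and.
  apply: contra (compl_H_edge_opposite q k l) => /andP [E0 E1].
  apply/Es_and => -[[|[|//]] i_lt].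
  - by rewrite (_ : Ordinal i_lt = ord0) //; apply: val_inj.
  - by rewrite (_ : Ordinal i_lt = ord_max) //; apply: val_inj.
have := leq_trans (subset_leq_card cover) (leq_card_setU _ _).
rewrite cardsT card_prod !card_ord.
by move: (small0 q qp0) (small1 q qp1); lia.
Qed.
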